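(* Assume a geometry satisfying axioms G1, G2, G3, L1, L2. If $\sigma$ is a dilatation, then its inverse map $\sigma^{-1}$ is also a dilatation (in particular, $\sigma^{-1}$ is injective in the sense that $S\ne T$ implies $\sigma^{-1}S\ne\sigma^{-1}T$).
   Context: Constructive setting: all reasoning is in Bishop-style constructive mathematics with intuitionistic logic (no law of excluded middle; a statement ''A or B'' requires a procedure deciding which holds, and existence requires a construction). A geometry $(\mathscr P,\mathscr L)$ consists of a set $\mathscr P$ of points with an equality relation, a set $\mathscr L$ of lines, each line being a subset of $\mathscr P$ (lines are equal iff equal as subsets), and a primitive relation $P\ne Q$ (''distinct points'') on $\mathscr P$, invariant under equality, such that: (c1) $\neg(P\ne P)$; (c2) $P\ne Q$ implies $Q\ne P$; (c3) if $P\ne Q$ then every point $R$ satisfies $R\ne P$ or $R\ne Q$; (c4) $\neg(P\ne Q)$ implies $P=Q$. (The relation $P\ne Q$ is affirmative, not merely the negation of equality.) A point $P$ lies outside a line $l$, written $P\notin l$, if $P\ne Q$ for every $Q\in l$. Lines are distinct, $l\ne m$, if some point of $l$ lies outside $m$ or some point of $m$ lies outside $l$. Lines are nonparallel, $l\nparallel m$, if $l\ne m$ and a point of $l\cap m$ can be exhibited; they are parallel, $l\parallel m$, if $\neg(l\nparallel m)$. Nonparallel lines have a unique common point, denoted $l\cap m$. Axioms: (G1) for distinct points $P,Q$ there is a unique line, denoted $P+Q$, containing both; (G2) for any point $P$ and line $l$ there is a unique line through $P$ parallel to $l$; (G3) there exist distinct points $A,B,C$ with $C\notin A+B$; (L1)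 if $l\nparallel m$, $P=l\cap m$, and $Q\ne P$, then $Q\notin l$ or $Q\notin m$; (L2) if $l\nparallel m$, then every line $n$ satisfies $n\nparallel l$ or $n\nparallel m$. A map $\varphi:\mathscr P\to\mathscr P$ is injective if $P\ne Q$ implies $\varphi P\ne\varphi Q$. A dilatation is a map $\sigma:\mathscr P\to\mathscr P$ that is injective and onto and satisfies $P+Q\parallel\sigma P+\sigma Q$ whenever $P\ne Q$. *)

Set Implicit Arguments.

(* A constructive geometry: a Bishop set of points with equality [peq] and a
   primitive affirmative apartness [pneq]; lines are (extensional) subsets of
   points, given via a type [Ln] with membership [on]. *)
Record Geometry := {
  Pt : Type;
  peq : Pt -> Pt -> Prop;
  peq_refl : forall P, peq P P;
  peq_sym : forall P Q, peq P Q -> peq Q P;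
  peq_trans : forall P Q R, peq P Q -> peq Q R -> peq P R;
  pneq : Pt -> Pt -> Prop;
  pneq_ext : forall P P' Q Q', peq P P' -> peq Q Q' -> pneq P Q -> pneq P' Q';
  c1 : forall P, ~ pneq P P;
  c2 : forall P Q, pneq P Q -> pneq Q P;
  c3 : forall P Q, pneq P Q -> forall R, pneq R P \/ pneq R Q;
  c4 : forall P Q, ~ pneq P Q -> peq P Q;
  Ln : Type;
  on : Pt -> Ln -> Prop;
  on_ext : forall P Q l, peq P Q -> on P l -> on Q l
}.
Arguments peq {_}. Arguments pneq {_}. Arguments on {_}.

Section Notions.
Context {G : Geometry}.

Definition leq (l m : Ln G) : Prop := forall P, on P l <-> on P m.
Definition outside (P : Pt G) (l : Ln G) : Prop := forall Q, on Q l -> pneq P Q.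
Definition lneq (l m : Ln G) : Prop :=
  (exists P, on P l /\ outside P m) \/ (exists P, on P m /\ outside P l).
Definition nonparallel (l m : Ln G) : Prop :=
  lneq l m /\ exists P, on P l /\ on P m.
Definition parallel (l m : Ln G) : Prop := ~ nonparallel l m.

Definition G1 : Prop := forall P Q, pneq P Q ->
  exists l, on P l /\ on Q l /\ forall m, on P m -> on Q m -> leq l m.
Definition G2 : Prop := forall P (l : Ln G),
  exists m, on P m /\ parallel m l /\
    forall m', on P m' -> parallel m' l -> leq m m'.
Definition G3 : Prop := exists A B C,
  pneq A B /\ pneq A C /\ pneq B C /\
  exists l, on A l /\ on B l /\ outside C l.
Definition L1 : Prop := forall l m P Q,
  nonparallel l m -> on P l -> on P m -> pneq Q P -> outside Q l \/ outside Q m.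
Definition L2 : Prop := forall l m,
  nonparallel l m -> forall n, nonparallel n l \/ nonparallel n m.

Definition is_map (f : Pt G -> Pt G) : Prop :=
  forall P Q, peq P Q -> peq (f P) (f Q).
Definition injective (f : Pt G -> Pt G) : Prop :=
  forall P Q, pneq P Q -> pneq (f P) (f Q).
Definition onto (f : Pt G -> Pt G) : Prop :=
  forall Q, exists P, peq (f P) Q.
(* P + Q || sigma P + sigma Q whenever P <> Q; l, m are the lines P+Q and
   sigma P + sigma Q (unique by G1, as sigma P <> sigma Q by injectivity). *)
Definition dilatation (f : Pt G -> Pt G) : Prop :=
  is_map f /\ injective f /\ onto f /\
  forall P Q l m, pneq P Q -> on P l -> on Q l -> on (f P) m -> on (f Q) m ->
    parallel l m.
End Notions.


(* The point is that a dilatation [sigma] reflects apartness: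
   [sigma x <> sigma y] implies [x <> y].  Choose [R] apart from [x] with
   [sigma R] off the line [n = sigma x + sigma y] (by L2 one of two
   nonparallel lines through [sigma x] is nonparallel to [n], and L1 puts the
   second point of that line off [n]).  Then [sigma R + sigma x] and
   [sigma R + sigma y] are nonparallel, hence by L2 so are their parallels
   [R + x] and [R + y], and by L1 the point [x] lies off [R + y], which
   contains [y].  So the inverse is injective, and the parallelism condition
   for it is the one for [sigma] read backwards. *)

Arguments c1 {g} P.
Arguments c2 {g P Q}.
Arguments c3 {g P Q}.
Arguments c4 {g P Q}.
Arguments pneq_ext {g P P' Q Q'}.
Arguments on_ext {g P Q l}.
Arguments peq_sym {g P Q}.

Section Geometry_facts.

Context {G : Geometry}.
Implicit Types (P Q R X Y Z : Pt G) (l m n : Ln G).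

Lemma nonparallel_sym {l m} : nonparallel l m -> nonparallel m l.
Proof.
  intros [Hlm [P [HPl HPm]]]; split; [unfold lneq in *; tauto | eauto].
Qed.

Lemma parallel_sym {l m} : parallel l m -> parallel m l.
Proof. intros Hlm Hml; apply Hlm, nonparallel_sym, Hml. Qed.

Lemma nonparallel_of_outside {l m P Q} :
  on P l -> on P m -> on Q l -> outside Q m -> nonparallel l m.
Proof. intros; split; [left | exists P]; eauto. Qed.

Hypothesis hL1 : L1 (G := G).
Hypothesis hL2 : L2 (G := G).

Lemma outside_of_meet {l m P Q} :
  nonparallel l m -> on P l -> on P m -> on Q l -> pneq Q P -> outside Q m.
Proof.
  intros Hlm HPl HPm HQl HQP.
  destruct (hL1 _ _ _ _ Hlm HPl HPm HQP) as [HQ | HQ]; [| exact HQ].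
  exfalso; exact (c1 Q (HQ Q HQl)).
Qed.

Lemma outside_one_of_two {l n Y Z} :
  nonparallel l n -> on Y l -> on Z l -> pneq Y Z -> outside Y n \/ outside Z n.
Proof.
  intros Hln HYl HZl HYZ.
  pose proof Hln as [_ [X [HXl HXn]]].
  destruct (c3 HYZ X) as [HXY | HXZ].
  - left; exact (outside_of_meet Hln HXl HXn HYl (c2 HXY)).
  - right; exact (outside_of_meet Hln HXl HXn HZl (c2 HXZ)).
Qed.

Lemma nonparallel_of_parallel {l l' m m'} :
  parallel l l' -> parallel m m' -> nonparallel l' m' -> nonparallel l m.
Proof.
  intros Hll' Hmm' Hl'm'.
  destruct (hL2 _ _ Hl'm' l) as [Hll'' | Hl'm]; [contradiction |].
  destruct (hL2 _ _ (nonparallel_sym Hl'm) m) as [Hmm'' | Hml]; [contradiction |].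
  exact (nonparallel_sym Hml).
Qed.

Hypothesis hG1 : G1 (G := G).
Hypothesis hG3 : G3 (G := G).

Lemma exists_pneq X : exists Y, pneq X Y.
Proof.
  destruct hG3 as [A [B [C [HAB _]]]].
  destruct (c3 HAB X); eauto.
Qed.

(* Of the two sides [A+B] and [A+C] of the triangle given by G3, L2 makes one
   nonparallel to [n]; one of the two points spanning that side is off [n]. *)
Lemma exists_outside n : exists W, outside W n.
Proof.
  destruct hG3 as [A [B [C [HAB [HAC [HBC [p [HAp [HBp HCp]]]]]]]]].
  destruct (hG1 _ _ HAC) as [q [HAq [HCq _]]].
  destruct (hL2 _ _ (nonparallel_of_outside HAq HAp HCq HCp) n) as [Hnq | Hnp].
  - destruct (outside_one_of_two (nonparallel_sym Hnq) HAq HCq HAC); eauto.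
  - destruct (outside_one_of_two (nonparallel_sym Hnp) HAp HBp HAB); eauto.
Qed.

Section Dilatation.

Context {sigma : Pt G -> Pt G}.
Hypothesis hsigma : dilatation sigma.

Lemma pneq_of_image_outside {x y R n} :
  pneq (sigma x) (sigma y) -> on (sigma x) n -> on (sigma y) n ->
  pneq x R -> pneq y R -> outside (sigma R) n -> pneq x y.
Proof.
  destruct hsigma as [_ [_ [_ hpar]]].
  intros Hxy Hxn Hyn HxR HyR HRn.
  destruct (hG1 _ _ (HRn _ Hxn)) as [a [HRa [Hxa _]]].
  destruct (hG1 _ _ (HRn _ Hyn)) as [b [HRb [Hyb _]]].
  assert (Hya : outside (sigma y) a).
  { exact (outside_of_meet (nonparallel_sym (nonparallel_of_outside Hxa Hxn HRa HRn))
             Hxn Hxa Hyn (c2 Hxy)). }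
  destruct (hG1 _ _ (c2 HxR)) as [l [HRl [Hxl _]]].
  destruct (hG1 _ _ (c2 HyR)) as [m [HRm [Hym _]]].
  assert (Hlm : nonparallel l m).
  { apply (nonparallel_of_parallel (hpar _ _ _ _ (c2 HxR) HRl Hxl HRa Hxa)
                                   (hpar _ _ _ _ (c2 HyR) HRm Hym HRb Hyb)).
    exact (nonparallel_sym (nonparallel_of_outside HRb HRa Hyb Hya)). }
  exact (outside_of_meet Hlm HRl HRm Hxl HxR y Hym).
Qed.

Lemma exists_apart_image_outside {x n} :
  on (sigma x) n -> exists R, pneq x R /\ outside (sigma R) n.
Proof.
  destruct hsigma as [_ [hinj [_ hpar]]]. intros Hxn.
  destruct (exists_pneq x) as [R1 HxR1].
  destruct (hG1 _ _ HxR1) as [k [Hxk [HR1k _]]].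
  destruct (exists_outside k) as [R2 HR2k].
  assert (HxR2 : pneq x R2) by exact (c2 (HR2k x Hxk)).
  destruct (hG1 _ _ HxR2) as [j [Hxj [HR2j _]]].
  destruct (hG1 _ _ (hinj _ _ HxR1)) as [k' [Hxk' [HR1k' _]]].
  destruct (hG1 _ _ (hinj _ _ HxR2)) as [j' [Hxj' [HR2j' _]]].
  assert (Hj'k' : nonparallel j' k').
  { apply (nonparallel_of_parallel
             (parallel_sym (hpar _ _ _ _ HxR2 Hxj HR2j Hxj' HR2j'))
             (parallel_sym (hpar _ _ _ _ HxR1 Hxk HR1k Hxk' HR1k'))).
    exact (nonparallel_of_outside Hxj Hxk HR2j HR2k). }
  destruct (hL2 _ _ Hj'k' n) as [Hnj' | Hnk'].
  - destruct (outside_one_of_two (nonparallel_sym Hnj') Hxj' HR2j' (hinj _ _ HxR2))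
      as [Hx | HR2].
    + exfalso; exact (c1 _ (Hx _ Hxn)).
    + eauto.
  - destruct (outside_one_of_two (nonparallel_sym Hnk') Hxk' HR1k' (hinj _ _ HxR1))
      as [Hx | HR1].
    + exfalso; exact (c1 _ (Hx _ Hxn)).
    + eauto.
Qed.

Lemma dilatation_reflects_pneq {x y} : pneq (sigma x) (sigma y) -> pneq x y.
Proof.
  intros Hxy.
  destruct (hG1 _ _ Hxy) as [n [Hxn [Hyn _]]].
  destruct (exists_apart_image_outside Hxn) as [R [HxR HRn]].
  destruct (c3 HxR y) as [Hyx | HyR]; [exact (c2 Hyx) |].
  exact (pneq_of_image_outside Hxy Hxn Hyn HxR HyR HRn).
Qed.

End Dilatation.

End Geometry_facts.

Lemma is_map_of_reflects_pneq (G : Geometry) (f : Pt G -> Pt G) :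
  (forall P Q, pneq (f P) (f Q) -> pneq P Q) -> is_map f.
Proof.
  intros hf P Q HPQ. apply c4. intros HfPQ.
  exact (c1 P (pneq_ext (peq_refl _ P) (peq_sym HPQ) (hf _ _ HfPQ))).
Qed.

Theorem theorem3p4 (G : Geometry)
  (hG1 : @G1 G) (hG2 : @G2 G) (hG3 : @G3 G) (hL1 : @L1 G) (hL2 : @L2 G)
  (sigma tau : Pt G -> Pt G)
  (hsigma : dilatation sigma)
  (hinv1 : forall Q, peq (sigma (tau Q)) Q)
  (hinv2 : forall P, peq (tau (sigma P)) P) :
  dilatation tau.
Proof.
  assert (Htau_inj : injective tau).
  { intros P Q HPQ.
    apply (dilatation_reflects_pneq hL1 hL2 hG1 hG3 hsigma).
    exact (pneq_ext (peq_sym (hinv1 P)) (peq_sym (hinv1 Q)) HPQ). }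
  destruct hsigma as [_ [hinj [_ hpar]]].
  split; [| split; [exact Htau_inj | split]].
  - apply is_map_of_reflects_pneq. intros P Q HPQ.
    exact (pneq_ext (hinv1 P) (hinv1 Q) (hinj _ _ HPQ)).
  - intros P. exists (sigma P). apply hinv2.
  - intros P Q l m HPQ HPl HQl HPm HQm.
    apply parallel_sym, (hpar _ _ m l (Htau_inj _ _ HPQ) HPm HQm).
    + exact (on_ext (peq_sym (hinv1 P)) HPl).
    + exact (on_ext (peq_sym (hinv1 Q)) HQl).
Qed.
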